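(* Consider problem (PI): minimize $f(x)$ subject to $x\in X$, $g_i(x)\le 0$, $i=1,\dots,m$, where $\Gamma\subseteq\mathbb R^n$ is an open convex set, $X\subseteq\Gamma$ is convex (not necessarily open), and $f,g_1,\dots,g_m:\Gamma\to\mathbb R$ are differentiable and quasiconvex on $\Gamma$. Let $\bar S$ be the solution set of (PI) and $\bar x\in\bar S$. Suppose GMFCQ holds at $\bar x$ and $\lambda=(\lambda_1,\dots,\lambda_m)$ is a KKT multiplier at $\bar x$. Then $\bar S\subseteq X_1(\lambda)$, and the Lagrangian $L(\cdot)=f(\cdot)+\sum_{i\in I(\bar x)}\lambda_i g_i(\cdot)$ is constant on $\bar S$.
   Context: Quasiconvexity on $\Gamma$: $f(x+t(y-x))\le\max\{f(x),f(y)\}$ for all $x,y\in\Gamma$, $t\in[0,1]$. Feasible set $S:=\{x\in X\mid g_i(x)\le0,\ i=1,\dots,m\}$; $\bar S$ the set of global minimizers of $f$ on $S$. Active index set $I(x):=\{i\mid g_i(x)=0\}$. For a cone $C$, its negative polar is $C^*:=\{x\in\mathbb R^n\mid c^Tx\le 0\ \forall c\in C\}$; $T_X(x)$ is the tangent cone of $X$ at $x$ and $N_X(x):=(T_X(x))^*$ is the normal cone. GMFCQ holds at $\bar x$ iff there is $y\in (N_X(\bar x))^*$ with $\nabla g_i(\bar x)^Ty<0$ for all $i\in I(\bar x)$. A KKT multiplier at $\bar x$ is $\lambda\in\mathbb R^m$ with $\lambda_i\ge0$ for all $i$, $\lambda_ig_i(\bar x)=0$ for all $i$, and $\big[\nabla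 f(\bar x)+\sum_{i\in I(\bar x)}\lambda_i\nabla g_i(\bar x)\big]^T(x-\bar x)\ge0$ for all $x\in X$. Define $\tilde I(\bar x,\lambda):=\{i\mid g_i(\bar x)=0,\ \lambda_i>0\}$ and $X_1(\lambda):=\{x\in X\mid g_i(x)=0\ \forall i\in\tilde I(\bar x,\lambda),\ g_i(x)\le0\ \forall i\notin\tilde I(\bar x,\lambda)\}$. *)

From Stdlib Require Import Reals Lra.
From Stdlib Require Vectors.Fin.
Open Scope R_scope.

Definition vec (n : nat) := Fin.t n -> R.

Fixpoint sumF (n : nat) : (Fin.t n -> R) -> R :=
  match n with
  | O => fun _ => 0
  | S k => fun f => f Fin.F1 + sumF k (fun i => f (Fin.FS i))
  end.

Definition vadd {n} (x y : vec n) : vec n := fun j => x j + y j.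
Definition vsub {n} (x y : vec n) : vec n := fun j => x j - y j.
Definition vscal {n} (t : R) (x : vec n) : vec n := fun j => t * x j.
Definition dot {n} (x y : vec n) : R := sumF n (fun j => x j * y j).
Definition vnorm {n} (x : vec n) : R := sqrt (dot x x).

Definition is_open {n} (G : vec n -> Prop) : Prop :=
  forall x, G x -> exists r, r > 0 /\ forall y, vnorm (vsub y x) < r -> G y.
Definition is_convex {n} (C : vec n -> Prop) : Prop :=
  forall x y t, C x -> C y -> 0 <= t <= 1 -> C (vadd x (vscal t (vsub y x))).

Definition quasiconvex_on {n} (G : vec n -> Prop) (f : vec n -> R) : Prop :=
  forall x y t, G x -> G y -> 0 <= t <= 1 ->
    f (vadd x (vscal t (vsub y x))) <= Rmax (f x) (f y).

Definition has_gradient {n} (G : vec n -> Prop) (f : vec n -> R) (x d : vec n) : Prop :=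
  forall eps, eps > 0 -> exists delta, delta > 0 /\
    forall h, G (vadd x h) -> vnorm h < delta ->
      Rabs (f (vadd x h) - f x - dot d h) <= eps * vnorm h.

Definition tangent_cone {n} (X : vec n -> Prop) (x : vec n) : vec n -> Prop :=
  fun v => exists (t : nat -> R) (d : nat -> vec n),
    (forall k, t k > 0) /\ Un_cv t 0 /\
    Un_cv (fun k => vnorm (vsub (d k) v)) 0 /\
    (forall k, X (vadd x (vscal (t k) (d k)))).

Definition polar {n} (C : vec n -> Prop) : vec n -> Prop :=
  fun y => forall c, C c -> dot c y <= 0.

Definition normal_cone {n} (X : vec n -> Prop) (x : vec n) : vec n -> Prop :=
  polar (tangent_cone X x).

Definition feasible {n m} (X : vec n -> Prop) (g : Fin.t m -> vec n -> R) : vec n -> Prop :=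
  fun x => X x /\ forall i, g i x <= 0.
Definition solution_set {n m} (X : vec n -> Prop) (f : vec n -> R)
    (g : Fin.t m -> vec n -> R) : vec n -> Prop :=
  fun x => feasible X g x /\ forall y, feasible X g y -> f x <= f y.

Definition active {n m} (g : Fin.t m -> vec n -> R) (x : vec n) (i : Fin.t m) : Prop :=
  g i x = 0.

Definition sum_active {n m} (g : Fin.t m -> vec n -> R) (xbar : vec n)
    (F : Fin.t m -> R) : R :=
  sumF m (fun i => if Req_EM_T (g i xbar) 0 then F i else 0).

Definition GMFCQ {n m} (X : vec n -> Prop) (g : Fin.t m -> vec n -> R)
    (gg : Fin.t m -> vec n -> vec n) (xbar : vec n) : Prop :=
  exists y, polar (normal_cone X xbar) y /\
    forall i, active g xbar i -> dot (gg i xbar) y < 0.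

(* KKT multiplier at xbar; gf, gg are the gradients of f, g_i *)
Definition KKT_multiplier {n m} (X : vec n -> Prop) (g : Fin.t m -> vec n -> R)
    (gf : vec n -> vec n) (gg : Fin.t m -> vec n -> vec n) (xbar : vec n)
    (lam : Fin.t m -> R) : Prop :=
  (forall i, lam i >= 0) /\ (forall i, lam i * g i xbar = 0) /\
  forall x, X x ->
    dot (fun j => gf xbar j + sum_active g xbar (fun i => lam i * gg i xbar j))
        (vsub x xbar) >= 0.

Definition Itilde {n m} (g : Fin.t m -> vec n -> R) (xbar : vec n)
    (lam : Fin.t m -> R) (i : Fin.t m) : Prop :=
  g i xbar = 0 /\ lam i > 0.

Definition X1 {n m} (X : vec n -> Prop) (g : Fin.t m -> vec n -> R) (xbar : vec n)
    (lam : Fin.t m -> R) : vec n -> Prop :=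
  fun x => X x /\
    (forall i, Itilde g xbar lam i -> g i x = 0) /\
    (forall i, ~ Itilde g xbar lam i -> g i x <= 0).

Definition lagrangian {n m} (f : vec n -> R) (g : Fin.t m -> vec n -> R)
    (xbar : vec n) (lam : Fin.t m -> R) (x : vec n) : R :=
  f x + sum_active g xbar (fun i => lam i * g i x).

From Stdlib Require Import Reals.
From Stdlib Require Vectors.Fin.
From Stdlib Require Import Lra Psatz FunctionalExtensionality.
Open Scope R_scope.

(* For a solution x, the KKT inequality at xbar in the direction x - xbar is a sum
   of nonpositive terms: grad f(xbar).(x - xbar) <= 0 and grad g_i(xbar).(x - xbar) <= 0
   for active i, both by the gradient inequality of differentiable quasiconvex
   functions.  Hence every term with lambda_i > 0 vanishes.  If moreover g_i(x) < 0,
   then g_i stays negative at x - s y for the GMFCQ direction y and small s > 0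
   (Gamma is open), and the gradient inequality at xbar gives
   grad g_i(xbar).y >= 0, contradicting GMFCQ.  So g_i(x) = 0 on the solution
   set for i in I~, which kills the multiplier terms of the Lagrangian there, and
   L = f is constant on the solution set. *)

Lemma sumF_ext n (F G : Fin.t n -> R) :
  (forall i, F i = G i) -> sumF n F = sumF n G.
Proof.
  revert F G; induction n; intros F G H; simpl; auto.
  rewrite H, (IHn (fun i => F (Fin.FS i)) (fun i => G (Fin.FS i))); auto.
Qed.

Lemma sumF_plus n (F G : Fin.t n -> R) :
  sumF n (fun i => F i + G i) = sumF n F + sumF n G.
Proof.
  revert F G; induction n; intros F G; simpl; [lra|].
  rewrite (IHn (fun i => F (Fin.FS i)) (fun i => G (Fin.FS i))); lra.
Qed.

Lemma sumF_scal n c (F : Fin.t n -> R) :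
  sumF n (fun i => c * F i) = c * sumF n F.
Proof.
  revert F; induction n; intros F; simpl; [lra|].
  rewrite (IHn (fun i => F (Fin.FS i))); lra.
Qed.

Lemma sumF_zero n (F : Fin.t n -> R) : (forall i, F i = 0) -> sumF n F = 0.
Proof.
  revert F; induction n; intros F H; simpl; [reflexivity|].
  rewrite H, (IHn (fun i => F (Fin.FS i))); auto; lra.
Qed.

Lemma sumF_swap n m (F : Fin.t m -> Fin.t n -> R) :
  sumF n (fun j => sumF m (fun i => F i j)) = sumF m (fun i => sumF n (fun j => F i j)).
Proof.
  revert F; induction n; intros F; simpl.
  - symmetry; apply sumF_zero; reflexivity.
  - rewrite IHn, <- sumF_plus. reflexivity.
Qed.

Lemma sumF_nonpos n (F : Fin.t n -> R) : (forall i, F i <= 0) -> sumF n F <= 0.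
Proof.
  revert F; induction n; intros F H; simpl; [lra|].
  specialize (IHn (fun i => F (Fin.FS i)) (fun i => H _)). specialize (H Fin.F1). lra.
Qed.

Lemma sumF_nonpos_eq0 n (F : Fin.t n -> R) :
  (forall i, F i <= 0) -> 0 <= sumF n F -> forall i, F i = 0.
Proof.
  revert F; induction n; intros F H Hs i.
  - inversion i.
  - simpl in Hs.
    pose proof (sumF_nonpos n (fun i => F (Fin.FS i)) (fun i => H _)).
    pose proof (H Fin.F1).
    apply (Fin.caseS' i (fun i => F i = 0)); [lra|].
    intros p. apply (IHn (fun i => F (Fin.FS i))); auto. lra.
Qed.

Lemma dot_vadd_r n (d a b : vec n) : dot d (vadd a b) = dot d a + dot d b.
Proof. unfold dot, vadd. rewrite <- sumF_plus. apply sumF_ext; intros; ring. Qed.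

Lemma dot_vadd_l n (a b v : vec n) : dot (vadd a b) v = dot a v + dot b v.
Proof. unfold dot, vadd. rewrite <- sumF_plus. apply sumF_ext; intros; ring. Qed.

Lemma dot_vscal_r n (d a : vec n) c : dot d (vscal c a) = c * dot d a.
Proof. unfold dot, vscal. rewrite <- sumF_scal. apply sumF_ext; intros; ring. Qed.

Lemma dot_vscal_l n (a v : vec n) c : dot (vscal c a) v = c * dot a v.
Proof. unfold dot, vscal. rewrite <- sumF_scal. apply sumF_ext; intros; ring. Qed.

Lemma dot_sumF_l n m (F : Fin.t m -> vec n) (v : vec n) :
  dot (fun j => sumF m (fun i => F i j)) v = sumF m (fun i => dot (F i) v).
Proof.
  unfold dot. rewrite <- sumF_swap. apply sumF_ext; intro j.
  rewrite Rmult_comm, <- sumF_scal. apply sumF_ext; intros; ring.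
Qed.

Lemma vnorm_nonneg n (v : vec n) : 0 <= vnorm v.
Proof. apply sqrt_pos. Qed.

Lemma vnorm_vscal n c (v : vec n) : vnorm (vscal c v) = Rabs c * vnorm v.
Proof.
  unfold vnorm.
  replace (dot (vscal c v) (vscal c v)) with (Rsqr c * dot v v).
  - rewrite sqrt_mult_alt by apply Rle_0_sqr. rewrite sqrt_Rsqr_abs. reflexivity.
  - unfold dot, vscal, Rsqr. rewrite <- sumF_scal. apply sumF_ext; intros; ring.
Qed.

Lemma vsub_vadd_l n (x h : vec n) : vsub (vadd x h) x = h.
Proof. apply functional_extensionality; intro j. unfold vsub, vadd; ring. Qed.

Lemma vsub_vadd_comm n (x h z : vec n) : vsub (vadd x h) z = vadd (vsub x z) h.
Proof. apply functional_extensionality; intro j. unfold vsub, vadd; ring. Qed.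

Lemma Rabs_le_inv x b : Rabs x <= b -> - b <= x <= b.
Proof. intros H. pose proof (Rle_abs x). pose proof (Rle_abs (- x)). rewrite Rabs_Ropp in *. lra. Qed.

Lemma exists_small_step N delta :
  0 <= N -> 0 < delta -> exists t, 0 < t <= 1 /\ t * N < delta.
Proof.
  intros HN Hd. exists (Rmin 1 (delta / (N + 1))).
  assert (Hq : delta / (N + 1) * (N + 1) = delta) by (field; lra).
  assert (0 < delta / (N + 1)) by (apply Rdiv_lt_0_compat; lra).
  pose proof (Rmin_l 1 (delta / (N + 1))). pose proof (Rmin_r 1 (delta / (N + 1))).
  split; [split; [apply Rmin_glb_lt; lra | assumption]|]. nra.
Qed.

Section Gradient.

Variables (n : nat) (G : vec n -> Prop) (f : vec n -> R) (x d : vec n).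
Hypothesis Hgrad : has_gradient G f x d.

Lemma has_gradient_descent_dir (v : vec n) :
  (forall t, 0 < t <= 1 -> G (vadd x (vscal t v)) /\ f (vadd x (vscal t v)) <= f x) ->
  dot d v <= 0.
Proof.
  intros Hdescent. destruct (Rle_or_lt (dot d v) 0) as [|Hpos]; [assumption|].
  exfalso. set (N := vnorm v). pose proof (vnorm_nonneg n v) as HN. fold N in HN.
  set (eps := dot d v / (2 * (N + 1))).
  assert (Heps : eps * (2 * (N + 1)) = dot d v) by (unfold eps; field; lra).
  destruct (Hgrad eps ltac:(nra)) as [delta [Hdelta Happrox]].
  destruct (exists_small_step N delta HN Hdelta) as [t [Ht HtN]].
  destruct (Hdescent t Ht) as [HG Hle].
  assert (Hnorm : vnorm (vscal t v) = t * N)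
    by (rewrite vnorm_vscal, Rabs_right by lra; reflexivity).
  specialize (Happrox (vscal t v) HG ltac:(rewrite Hnorm; lra)).
  rewrite Hnorm, dot_vscal_r in Happrox. apply Rabs_le_inv in Happrox as [Hlow _].
  assert (eps * N < dot d v) by nra.
  nra.
Qed.

(* Continuity along a direction, from the gradient with tolerance eps = 1. *)
Lemma has_gradient_strict_sublevel_dir (c : R) (v : vec n) :
  is_open G -> G x -> f x < c ->
  exists s, 0 < s /\ G (vadd x (vscal s v)) /\ f (vadd x (vscal s v)) < c.
Proof.
  intros Hopen Hx Hlt.
  destruct (Hopen x Hx) as [r [Hr Hball]].
  destruct (Hgrad 1 ltac:(lra)) as [delta [Hdelta Happrox]].
  set (N := vnorm v). pose proof (vnorm_nonneg n v) as HN. fold N in HN.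
  set (K := Rabs (dot d v) + N). pose proof (Rabs_pos (dot d v)).
  pose proof (Rle_abs (dot d v)).
  destruct (exists_small_step K (Rmin (c - f x) (Rmin r delta)) ltac:(unfold K; lra))
    as [s [Hs HsK]].
  { apply Rmin_glb_lt; [lra|]. apply Rmin_glb_lt; lra. }
  pose proof (Rmin_l (c - f x) (Rmin r delta)).
  pose proof (Rle_trans _ _ _ (Rmin_r (c - f x) (Rmin r delta)) (Rmin_l r delta)).
  pose proof (Rle_trans _ _ _ (Rmin_r (c - f x) (Rmin r delta)) (Rmin_r r delta)).
  assert (HsN : s * N <= s * K) by (unfold K; nra).
  assert (Hnorm : vnorm (vscal s v) = s * N)
    by (rewrite vnorm_vscal, Rabs_right by lra; reflexivity).
  assert (HG : G (vadd x (vscal s v))).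
  { apply Hball. rewrite vsub_vadd_l, Hnorm. lra. }
  exists s. split; [lra|]. split; [assumption|].
  specialize (Happrox (vscal s v) HG ltac:(lra)).
  rewrite Hnorm, dot_vscal_r in Happrox. apply Rabs_le_inv in Happrox as [_ Hup].
  unfold K in HsK. nra.
Qed.

End Gradient.

Lemma quasiconvex_gradient_nonpos n (G : vec n -> Prop) (f : vec n -> R) (x z d : vec n) :
  is_convex G -> quasiconvex_on G f -> has_gradient G f x d ->
  G x -> G z -> f z <= f x -> dot d (vsub z x) <= 0.
Proof.
  intros Hconv Hqc Hgrad Hx Hz Hle.
  apply (has_gradient_descent_dir n G f x d Hgrad). intros t Ht.
  split; [apply Hconv; auto; lra|].
  apply Rle_trans with (Rmax (f x) (f z)); [apply Hqc; auto; lra | apply Rmax_lub; lra].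
Qed.

Lemma solution_set_value_eq n m (X : vec n -> Prop) (f : vec n -> R)
  (g : Fin.t m -> vec n -> R) (x y : vec n) :
  solution_set X f g x -> solution_set X f g y -> f x = f y.
Proof.
  intros [Hx Hminx] [Hy Hminy]. specialize (Hminx y Hy). specialize (Hminy x Hx). lra.
Qed.

Section SumActive.

Variables (n m : nat) (g : Fin.t m -> vec n -> R) (xbar : vec n).

Lemma sum_active_eq0 (F : Fin.t m -> R) :
  (forall i, active g xbar i -> F i = 0) -> sum_active g xbar F = 0.
Proof.
  intros H. unfold sum_active. apply sumF_zero; intro i.
  destruct (Req_EM_T (g i xbar) 0); [apply H; assumption | reflexivity].
Qed.

Lemma sum_active_nonpos_eq0 (F : Fin.t m -> R) :
  (forall i, active g xbar i -> F i <= 0) -> 0 <= sum_active g xbar F ->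
  forall i, active g xbar i -> F i = 0.
Proof.
  intros Hnonpos Hsum i Hi.
  assert (Hterms : forall k, (if Req_EM_T (g k xbar) 0 then F k else 0) <= 0).
  { intros k. destruct (Req_EM_T (g k xbar) 0); [apply Hnonpos; assumption | lra]. }
  pose proof (sumF_nonpos_eq0 m _ Hterms Hsum i) as Heq.
  simpl in Heq. destruct (Req_EM_T (g i xbar) 0); [assumption | contradiction].
Qed.

Lemma dot_sum_active_l (lam : Fin.t m -> R) (grad : Fin.t m -> vec n) (v : vec n) :
  dot (fun j => sum_active g xbar (fun i => lam i * grad i j)) v =
  sum_active g xbar (fun i => lam i * dot (grad i) v).
Proof.
  unfold sum_active.
  rewrite (dot_sumF_l n m
    (fun i j => if Req_EM_T (g i xbar) 0 then lam i * grad i j else 0)).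
  apply sumF_ext; intro i. destruct (Req_EM_T (g i xbar) 0).
  - apply (dot_vscal_l n (grad i) v (lam i)).
  - unfold dot. apply sumF_zero; intros; ring.
Qed.

End SumActive.

Section KKT.

Variables (n m : nat) (Gamma X : vec n -> Prop) (f : vec n -> R)
  (g : Fin.t m -> vec n -> R) (gf : vec n -> vec n) (gg : Fin.t m -> vec n -> vec n)
  (xbar : vec n) (lam : Fin.t m -> R).

Hypotheses (HGamma_convex : is_convex Gamma) (HX_Gamma : forall x, X x -> Gamma x)
  (Hf_grad : forall x, Gamma x -> has_gradient Gamma f x (gf x))
  (Hg_grad : forall i x, Gamma x -> has_gradient Gamma (g i) x (gg i x))
  (Hf_qc : quasiconvex_on Gamma f) (Hg_qc : forall i, quasiconvex_on Gamma (g i))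
  (Hxbar : solution_set X f g xbar) (Hkkt : KKT_multiplier X g gf gg xbar lam).

Lemma kkt_gradient_orthogonal x i :
  solution_set X f g x -> Itilde g xbar lam i -> dot (gg i xbar) (vsub x xbar) = 0.
Proof.
  intros Hx [Hactive Hlam_pos].
  destruct Hxbar as [[HXxbar _] _]. destruct Hkkt as [Hlam_nonneg [_ Hineq]].
  pose proof Hx as [[HXx Hgx] Hminx].
  assert (Hf_dir : dot (gf xbar) (vsub x xbar) <= 0).
  { apply (quasiconvex_gradient_nonpos n Gamma f); auto.
    rewrite (solution_set_value_eq n m X f g x xbar); auto; lra. }
  assert (Hg_dir : forall k, active g xbar k ->
            lam k * dot (gg k xbar) (vsub x xbar) <= 0).
  { intros k Hk. specialize (Hlam_nonneg k).
    assert (dot (gg k xbar) (vsub x xbar) <= 0).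
    { apply (quasiconvex_gradient_nonpos n Gamma (g k)); auto.
      unfold active in Hk. rewrite Hk. auto. }
    nra. }
  specialize (Hineq x HXx).
  rewrite (dot_vadd_l n (gf xbar) (fun j => sum_active g xbar (fun i => lam i * gg i xbar j))),
    (dot_sum_active_l n m g xbar lam (fun k => gg k xbar)) in Hineq.
  assert (Hsum : 0 <= sum_active g xbar (fun k => lam k * dot (gg k xbar) (vsub x xbar)))
    by lra.
  pose proof (sum_active_nonpos_eq0 n m g xbar _ Hg_dir Hsum i Hactive) as Hi.
  apply Rmult_integral in Hi as [|]; [lra | assumption].
Qed.

Lemma kkt_active_on_solution_set x i :
  is_open Gamma -> GMFCQ X g gg xbar ->
  solution_set X f g x -> Itilde g xbar lam i -> g i x = 0.
Proof.
  intros Hopen [y [_ Hy]] Hx Hi.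
  pose proof (kkt_gradient_orthogonal x i Hx Hi) as Horth.
  destruct Hi as [Hactive _]. specialize (Hy i Hactive).
  pose proof Hx as [[HXx Hgx] _]. destruct Hxbar as [[HXxbar _] _].
  destruct (Req_dec (g i x) 0) as [|Hne]; [assumption|]. exfalso.
  destruct (has_gradient_strict_sublevel_dir n Gamma (g i) x (gg i x)
              (Hg_grad i x (HX_Gamma x HXx)) 0 (vscal (-1) y) Hopen (HX_Gamma x HXx)
              ltac:(specialize (Hgx i); lra)) as [s [Hs [HG Hlt]]].
  assert (Hdir : dot (gg i xbar) (vsub (vadd x (vscal s (vscal (-1) y))) xbar) <= 0).
  { apply (quasiconvex_gradient_nonpos n Gamma (g i)); auto. rewrite Hactive. lra. }
  rewrite vsub_vadd_comm, dot_vadd_r, Horth, !dot_vscal_r in Hdir. nra.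
Qed.

Lemma lagrangian_on_solution_set x :
  is_open Gamma -> GMFCQ X g gg xbar ->
  solution_set X f g x -> lagrangian f g xbar lam x = f x.
Proof.
  intros Hopen Hgmfcq Hx. unfold lagrangian.
  rewrite sum_active_eq0; [ring|]. intros i Hactive.
  destruct Hkkt as [Hlam_nonneg _]. specialize (Hlam_nonneg i).
  destruct (Rle_lt_or_eq_dec 0 (lam i)) as [Hpos | <-]; [lra | | ring].
  rewrite (kkt_active_on_solution_set x i Hopen Hgmfcq Hx (conj Hactive Hpos)). ring.
Qed.

End KKT.

Theorem lemma7 (n m : nat) (Gamma X : vec n -> Prop)
  (f : vec n -> R) (g : Fin.t m -> vec n -> R)
  (gf : vec n -> vec n) (gg : Fin.t m -> vec n -> vec n)
  (xbar : vec n) (lam : Fin.t m -> R) :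
  is_open Gamma -> is_convex Gamma ->
  is_convex X -> (forall x, X x -> Gamma x) ->
  (forall x, Gamma x -> has_gradient Gamma f x (gf x)) ->
  (forall i x, Gamma x -> has_gradient Gamma (g i) x (gg i x)) ->
  quasiconvex_on Gamma f -> (forall i, quasiconvex_on Gamma (g i)) ->
  solution_set X f g xbar ->
  GMFCQ X g gg xbar ->
  KKT_multiplier X g gf gg xbar lam ->
  (forall x, solution_set X f g x -> X1 X g xbar lam x) /\
  (forall x y, solution_set X f g x -> solution_set X f g y ->
     lagrangian f g xbar lam x = lagrangian f g xbar lam y).
Proof.
  intros Hopen HGc _ HXG Hf Hg Hfq Hgq Hxbar Hgmfcq Hkkt. split.
  - intros x Hx. pose proof Hx as [[HXx Hgx] _].
    split; [assumption | split; [|auto]].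
    intros i Hi. exact (kkt_active_on_solution_set n m Gamma X f g gf gg xbar lam
                          HGc HXG Hf Hg Hfq Hgq Hxbar Hkkt x i Hopen Hgmfcq Hx Hi).
  - intros x y Hx Hy.
    rewrite !(lagrangian_on_solution_set n m Gamma X f g gf gg xbar lam
                HGc HXG Hf Hg Hfq Hgq Hxbar Hkkt _ Hopen Hgmfcq) by assumption.
    exact (solution_set_value_eq n m X f g x y Hx Hy).
Qed.
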